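(* Let $p\ge 0$, let $(\kappa_i)_{i\ge1}$ be a sequence with $C^{-1}i^{-p}\le \kappa_i\le C i^{-p}$ for all $i$ and some $C\ge 1$, let $\mu_0=(\mu_{0,i})_{i\ge1}\in\ell_2$, and for $n\ge 2$ define $h_n:(0,\infty)\to[0,\infty)$ by \[ h_n(\alpha)=\frac{1+2\alpha+2p}{n^{1/(1+2\alpha+2p)}\log n}\sum_{i=1}^{\infty}\frac{n^2 i^{1+2\alpha}\mu_{0,i}^2\log i}{(i^{1+2\alpha}\kappa_i^{-2}+n)^2}. \] For constants $0<l<L$ put \[ \underline{\alpha}_n=\inf\{\alpha>0: h_n(\alpha)>l\}\wedge\sqrt{\log n},\qquad \overline{\alpha}_n=\inf\{\alpha>0: h_n(\alpha)>L(\log n)^2\}. \] Then for any $l,L>0$ the following hold. (i) For all $\beta,R>0$ there exists $c_0>0$ such that $\inf_{\|\mu_0\|_\beta\le R}\underline{\alpha}_n\ge \beta-\frac{c_0}{\log n}$ for all $n$ large enough. (ii) For all $\gamma,R>0$, $\inf_{\|\mu_0\|_{A^\gamma}\le R}\underline{\alpha}_n\ge \frac{\sqrt{\log n}}{\log\log n}$ for all $n$ large enough. (iii) If $\mu_{0,i}\ge c\, i^{-\gamma-1/2}$ for all $i$, for some $c,\gamma>0$, then for a constant $C_0>0$ depending only on $c$ and $\gamma$ we have $\overline{\alpha}_n\le \gamma+C_0\frac{\log\log n}{\log n}$ for all $n$ large enough. (iv) If $\mu_{0,i}\ne 0$ for some $i\ge 2$, then $\overline{\alpha}_n\le \frac{\log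 n}{2\log 2}-\frac12-p$ for all $n$ large enough.
   Context: For $\mu\in\ell_2$ and $\beta,\gamma\ge0$: the Sobolev norm is $\|\mu\|_\beta^2=\sum_{i\ge1} i^{2\beta}\mu_i^2$ and the analytic norm is $\|\mu\|_{A^\gamma}^2=\sum_{i\ge1}e^{2\gamma i}\mu_i^2$. $a\wedge b=\min(a,b)$. The infimum of the empty set is $+\infty$. *)

From Stdlib Require Import Reals.
From Coquelicot Require Import Coquelicot.
Open Scope R_scope.

(* Sequences indexed by i >= 1 are represented by functions nat -> R;
   the value at index 0 is irrelevant. Sums over i >= 1 are written as
   Series over k of the (S k)-th term. *)

Definition in_l2 (mu : nat -> R) : Prop := ex_series (fun k => (mu (S k))^2).

(* ||mu||_beta <= Rad  (Sobolev norm, +oo if the series diverges) *)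
Definition sobolev_ball (beta Rad : R) (mu : nat -> R) : Prop :=
  ex_series (fun k => Rpower (INR (S k)) (2 * beta) * (mu (S k))^2) /\
  sqrt (Series (fun k => Rpower (INR (S k)) (2 * beta) * (mu (S k))^2)) <= Rad.

(* ||mu||_{A^gamma} <= Rad  (analytic norm, +oo if the series diverges) *)
Definition analytic_ball (gamma Rad : R) (mu : nat -> R) : Prop :=
  ex_series (fun k => exp (2 * gamma * INR (S k)) * (mu (S k))^2) /\
  sqrt (Series (fun k => exp (2 * gamma * INR (S k)) * (mu (S k))^2)) <= Rad.

Definition h_fun (p : R) (kappa mu : nat -> R) (n : nat) (alpha : R) : R :=
  (1 + 2 * alpha + 2 * p) / (Rpower (INR n) (1 / (1 + 2 * alpha + 2 * p)) * ln (INR n)) *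
  Series (fun k =>
    (INR n)^2 * Rpower (INR (S k)) (1 + 2 * alpha) * (mu (S k))^2 * ln (INR (S k)) /
    (Rpower (INR (S k)) (1 + 2 * alpha) * (/ (kappa (S k))^2) + INR n)^2).

(* underline alpha_n = inf{alpha>0 : h_n(alpha) > l} /\ sqrt(log n); inf of empty set = +oo *)
Definition alpha_lower (p : R) (kappa mu : nat -> R) (l : R) (n : nat) : Rbar :=
  Rbar_min (Glb_Rbar (fun alpha => 0 < alpha /\ h_fun p kappa mu n alpha > l))
           (Finite (sqrt (ln (INR n)))).

Definition alpha_upper (p : R) (kappa mu : nat -> R) (L : R) (n : nat) : Rbar :=
  Glb_Rbar (fun alpha => 0 < alpha /\ h_fun p kappa mu n alpha > L * (ln (INR n))^2).

(* Write [L = ln n], [a = 1 + 2 alpha + 2 p] and [D_i = i^(1 + 2 alpha) kappa_i^-2]; since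
   [kappa_i^-2] is comparable to [i^(2p)], [D_i] is comparable to [i^a]. The i-th term of [h_n]
   has denominator [(D_i + n)^2], so the terms change regime at [i = n^(1/a)], and the prefactor
   is [a n^(-1/a) / L].
   For the upper bounds on [h_n] in (i) and (ii), interpolate [(D_i + n)^2 >= D_i^(2 th) n^(2 - 2 th)]
   and absorb the remaining powers of [i] into the Sobolev, resp. analytic, norm of [mu]; for
   [alpha] below [beta - c0 / L], resp. [sqrt L / ln L], the factor [n^(-1/a)] wins and [h_n]
   stays below [l].
   For the lower bounds in (iii) and (iv), keep only indices with [i^a <= n], whose terms are of
   order [i^(1 + 2 alpha) mu_i^2 ln i]: the roughly [n^(1/a)/4] indices in [[n^(1/a)/2, n^(1/a)]]
   when [mu] decays at most polynomially, or the single index [i0] with [i0^a = n] when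
   [mu_i0 <> 0]. *)

From Stdlib Require Import Reals Lra Lia Psatz.
From Coquelicot Require Import Coquelicot.
Open Scope R_scope.

(** * Elementary inequalities and nonnegative series *)

Lemma exp_le_compat (x y : R) : x <= y -> exp x <= exp y.
Proof. intros [H | ->]; [left; apply exp_increasing |]; lra. Qed.

Lemma ln_ge_0 (x : R) : 1 <= x -> 0 <= ln x.
Proof. intros Hx; rewrite <- ln_1; apply ln_le; lra. Qed.

Lemma ln_le_sub_1 (x : R) : 0 < x -> ln x <= x - 1.
Proof.
  intros Hx; pose proof (exp_ineq1_le (ln x)) as H.
  rewrite exp_ln in H; lra.
Qed.

Lemma ln_le_Rpower_div (x d : R) : 1 <= x -> 0 < d -> ln x <= Rpower x d / d.
Proof.
  intros Hx Hd; unfold Rpower; pose proof (exp_ineq1_le (d * ln x)).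
  apply Rmult_le_reg_r with d; [lra |].
  unfold Rdiv; rewrite Rmult_assoc, Rinv_l; lra.
Qed.

Lemma Rpower_mul_ln_le (x s t L : R) : 1 <= x -> 0 < L -> s + 1 / L <= t ->
  Rpower x s * ln x <= L * Rpower x t.
Proof.
  intros Hx HL Hst.
  apply Rle_trans with (Rpower x s * (Rpower x (1 / L) / (1 / L))).
  - apply Rmult_le_compat_l; [left; apply exp_pos |].
    apply ln_le_Rpower_div; [lra | apply Rdiv_lt_0_compat; lra].
  - replace (Rpower x s * (Rpower x (1 / L) / (1 / L))) with (L * Rpower x (s + 1 / L))
      by (rewrite Rpower_plus; field; lra).
    apply Rmult_le_compat_l; [lra | apply Rle_Rpower; lra].
Qed.

Lemma ln_le_2_sqrt (x : R) : 0 < x -> ln x <= 2 * sqrt x.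
Proof.
  intros Hx; assert (Hs : 0 < sqrt x) by (apply sqrt_lt_R0; lra).
  rewrite <- (sqrt_sqrt x) at 1 by lra; rewrite ln_mult by lra.
  pose proof (ln_le_sub_1 (sqrt x) Hs); lra.
Qed.

Lemma exp_ge_cube (y : R) : 0 <= y -> (y / 3) ^ 3 <= exp y.
Proof.
  intros Hy; replace (exp y) with (exp (y / 3) ^ 3).
  - apply pow_incr; pose proof (exp_ineq1_le (y / 3)); lra.
  - simpl; rewrite Rmult_1_r, <- !exp_plus; f_equal; field.
Qed.

Lemma weighted_geom_mean_le_add (D y th : R) : 0 < D -> 0 < y -> 0 <= th <= 1 ->
  exp (th * ln D + (1 - th) * ln y) <= D + y.
Proof.
  intros HD Hy Hth; destruct (Rle_dec (ln D) (ln y)).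
  - apply Rle_trans with (exp (ln y)); [apply exp_le_compat; nra | rewrite exp_ln; lra].
  - apply Rle_trans with (exp (ln D)); [apply exp_le_compat; nra | rewrite exp_ln; lra].
Qed.

Lemma ln_INR_eventually_ge (M : R) :
  exists N : nat, forall n, (N <= n)%nat -> M <= ln (INR n) /\ 1 < INR n.
Proof.
  destruct (INR_unbounded (exp M + 1)) as [N HN]; exists N; intros n Hn.
  apply le_INR in Hn; pose proof (exp_pos M); split; [| lra].
  rewrite <- (ln_exp M) at 1; apply ln_le; lra.
Qed.

Section NonnegSeries.

Variable a : nat -> R.
Hypothesis a_ge0 : forall k, 0 <= a k.
Hypothesis a_ex : ex_series a.

Lemma sum_f_R0_le_Series (N : nat) : sum_f_R0 a N <= Series a.
Proof.
  apply sum_incr; auto; apply is_series_Reals, Series_correct, a_ex.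
Qed.

Lemma term_le_Series (k : nat) : a k <= Series a.
Proof.
  apply Rle_trans with (sum_f_R0 a k); [| apply sum_f_R0_le_Series].
  destruct k as [| k]; simpl; [lra |].
  pose proof (cond_pos_sum a k a_ge0); lra.
Qed.

Lemma Series_le_sqr_of_sqrt_le (r : R) : sqrt (Series a) <= r -> Series a <= r ^ 2.
Proof.
  intros Hr; pose proof (Rle_trans _ _ _ (a_ge0 0) (term_le_Series 0)).
  rewrite <- (sqrt_sqrt (Series a)) by lra; pose proof (sqrt_pos (Series a)); nra.
Qed.

End NonnegSeries.

Lemma sum_f_R0_ge_block (a : nat -> R) (j J : nat) (b : R) :
  (forall k, 0 <= a k) -> (forall k, (j < k <= j + J)%nat -> b <= a k) ->
  INR J * b <= sum_f_R0 a (j + J).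
Proof.
  intros Ha Hb; induction J as [| J IH].
  - rewrite Rmult_0_l, Nat.add_0_r; apply cond_pos_sum, Ha.
  - rewrite Nat.add_succ_r, S_INR; simpl sum_f_R0.
    assert (b <= a (S (j + J))) by (apply Hb; lia).
    assert (INR J * b <= sum_f_R0 a (j + J)) by (apply IH; intros; apply Hb; lia).
    lra.
Qed.

Lemma Series_le_scal (a v : nat -> R) (K : R) :
  (forall k, 0 <= a k <= K * v k) -> ex_series v -> Series a <= K * Series v.
Proof.
  intros Hav Hv; rewrite <- Series_scal_l; apply Series_le; auto.
  apply (@ex_series_scal_l R_AbsRing R_NormedModule), Hv.
Qed.

Lemma Glb_Rbar_le_of_mem (E : R -> Prop) (x y : R) :
  E x -> x <= y -> Rbar_le (Glb_Rbar E) y.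
Proof.
  intros Hx Hxy; apply Rbar_le_trans with (Finite x); [| exact Hxy].
  apply (Glb_Rbar_correct E); exact Hx.
Qed.

Lemma Glb_Rbar_ge_of_lb (E : R -> Prop) (y : R) :
  (forall x, E x -> y <= x) -> Rbar_le y (Glb_Rbar E).
Proof. intros H; apply (Glb_Rbar_correct E); intros x Hx; apply H, Hx. Qed.

Lemma Series_ge_range (a : nat -> R) (m b : R) :
  (forall k, 0 <= a k) -> ex_series a -> 8 <= m -> 0 <= b ->
  (forall k, m / 2 <= INR (S k) <= m -> b <= a k) -> m / 4 * b <= Series a.
Proof.
  intros Ha Hex Hm Hb Hab.
  destruct (nfloor_ex (m / 2) ltac:(lra)) as [j [Hj1 Hj2]].
  assert (Hj : (1 <= j)%nat) by (apply INR_le; simpl; lra).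
  apply Rle_trans with (INR (j - 1) * b).
  - rewrite minus_INR by exact Hj; apply Rmult_le_compat_r; simpl; lra.
  - eapply Rle_trans; [| apply (sum_f_R0_le_Series a Ha Hex (j + (j - 1)))].
    apply sum_f_R0_ge_block; [exact Ha |]; intros k Hk; apply Hab.
    assert (INR j + 1 <= INR k) by (rewrite <- S_INR; apply le_INR; lia).
    assert (INR (S k) <= 2 * INR j) by (replace (2 * INR j) with (INR (2 * j)) by
      (rewrite mult_INR; simpl; ring); apply le_INR; lia).
    rewrite S_INR in *; lra.
Qed.

(** * The terms of h_n *)

Definition h_prefactor (p : R) (n : nat) (alpha : R) : R :=
  (1 + 2 * alpha + 2 * p) / (Rpower (INR n) (1 / (1 + 2 * alpha + 2 * p)) * ln (INR n)).

Definition h_term (n : nat) (alpha x k m : R) : R :=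
  (INR n)^2 * Rpower x (1 + 2 * alpha) * m^2 * ln x /
    (Rpower x (1 + 2 * alpha) * / k^2 + INR n)^2.

Definition h_terms (kappa mu : nat -> R) (n : nat) (alpha : R) (k : nat) : R :=
  h_term n alpha (INR (S k)) (kappa (S k)) (mu (S k)).

Lemma h_fun_eq (p : R) (kappa mu : nat -> R) (n : nat) (alpha : R) :
  h_fun p kappa mu n alpha = h_prefactor p n alpha * Series (h_terms kappa mu n alpha).
Proof. reflexivity. Qed.

Lemma h_prefactor_exp (p : R) (n : nat) (alpha : R) :
  1 < INR n -> 0 < 1 + 2 * alpha + 2 * p ->
  h_prefactor p n alpha =
  (1 + 2 * alpha + 2 * p) * exp (- ln (INR n) / (1 + 2 * alpha + 2 * p)) / ln (INR n).
Proof.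
  intros Hn Ha; unfold h_prefactor, Rpower.
  assert (0 < ln (INR n)) by (rewrite <- ln_1; apply ln_increasing; lra).
  set (a := 1 + 2 * alpha + 2 * p) in *; set (L := ln (INR n)) in *.
  replace (- L / a) with (- (1 / a * L)) by (field; lra).
  rewrite exp_Ropp; field; split; [apply Rgt_not_eq, exp_pos | lra].
Qed.

Lemma h_prefactor_pos (p : R) (n : nat) (alpha : R) :
  1 < INR n -> 0 < 1 + 2 * alpha + 2 * p -> 0 < h_prefactor p n alpha.
Proof.
  intros Hn Ha; apply Rdiv_lt_0_compat; [lra |].
  apply Rmult_lt_0_compat; [apply exp_pos |].
  rewrite <- ln_1; apply ln_increasing; lra.
Qed.

Lemma weight_inv_sq_bounds (p C x k : R) : 0 < C ->
  / C * Rpower x (- p) <= k <= C * Rpower x (- p) ->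
  0 < k /\ Rpower x (2 * p) / C ^ 2 <= / k ^ 2 <= C ^ 2 * Rpower x (2 * p).
Proof.
  intros HC [Hlo Hhi]; set (r := Rpower x (- p)) in *.
  assert (Hr : 0 < r) by (unfold r; apply exp_pos).
  assert (Hx2p : Rpower x (2 * p) = / r ^ 2).
  { unfold r, Rpower; simpl; rewrite Rmult_1_r, <- exp_plus, <- exp_Ropp.
    f_equal; ring. }
  assert (Hk : 0 < k) by (eapply Rlt_le_trans; [| exact Hlo]; apply Rmult_lt_0_compat;
                          [apply Rinv_0_lt_compat |]; lra).
  assert (H1 : (r / C) ^ 2 <= k ^ 2) by (apply pow_incr; unfold Rdiv; split;
    [apply Rmult_le_pos; [| left; apply Rinv_0_lt_compat]; lra | lra]).
  assert (H2 : k ^ 2 <= (C * r) ^ 2) by (apply pow_incr; lra).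
  assert (0 < (r / C) ^ 2) by (apply pow_lt, Rdiv_lt_0_compat; lra).
  rewrite Hx2p; repeat split; auto.
  - replace (/ r ^ 2 / C ^ 2) with (/ (C * r) ^ 2) by (field; lra).
    apply Rinv_le_contravar; [apply pow_lt |]; lra.
  - replace (C ^ 2 * / r ^ 2) with (/ (r / C) ^ 2) by (field; lra).
    apply Rinv_le_contravar; lra.
Qed.

Section Terms.

Variables (n : nat) (alpha x k m : R).
Hypotheses (Hn : 0 < INR n) (Hx : 1 <= x) (Hk : 0 < k).

Let X := Rpower x (1 + 2 * alpha).
Let D := X * / k ^ 2.

Let X_pos : 0 < X. Proof. apply exp_pos. Qed.
Let D_pos : 0 < D. Proof. apply Rmult_lt_0_compat; [| apply Rinv_0_lt_compat, pow_lt]; auto. Qed.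
Let ln_x_ge0 : 0 <= ln x. Proof. apply ln_ge_0, Hx. Qed.

Lemma h_term_nonneg : 0 <= h_term n alpha x k m.
Proof.
  apply Rdiv_le_0_compat; [| apply pow_lt; fold X D; lra].
  apply Rmult_le_pos; [| exact ln_x_ge0].
  apply Rmult_le_pos; [apply Rmult_le_pos; [apply pow_le |] | apply pow2_ge_0]; fold X; lra.
Qed.

Lemma h_term_le_sq_weight (C : R) : 0 <= alpha -> 0 < C -> / C ^ 2 <= / k ^ 2 ->
  h_term n alpha x k m <= (INR n) ^ 2 * C ^ 4 * m ^ 2.
Proof.
  intros Ha HC HCk; unfold h_term; fold X D.
  assert (HxX : x <= X) by (unfold X; rewrite <- (Rpower_1 x) at 1 by lra;
                            apply Rle_Rpower; lra).
  assert (Hlnx : ln x <= x) by (pose proof (ln_le_sub_1 x); lra).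
  assert (0 < / C ^ 2) by (apply Rinv_0_lt_compat, pow_lt; lra).
  assert (HD : X * / C ^ 2 <= D) by (apply Rmult_le_compat_l; lra).
  apply Rle_trans with ((INR n) ^ 2 * X * m ^ 2 * ln x / (X * / C ^ 2) ^ 2).
  - apply Rmult_le_compat_l.
    + apply Rmult_le_pos; [apply Rmult_le_pos; [apply Rmult_le_pos; [apply pow_le |] |
        apply pow2_ge_0] |]; lra.
    + apply Rinv_le_contravar; [apply pow_lt; nra | apply pow_incr; nra].
  - replace ((INR n) ^ 2 * X * m ^ 2 * ln x / (X * / C ^ 2) ^ 2)
      with ((INR n) ^ 2 * C ^ 4 * m ^ 2 * (ln x / X)) by (field; lra).
    rewrite <- (Rmult_1_r ((INR n) ^ 2 * C ^ 4 * m ^ 2)) at 2.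
    assert (0 <= (INR n) ^ 2 * C ^ 4 * m ^ 2) by
      (apply Rmult_le_pos; [apply Rmult_le_pos; apply pow_le | apply pow2_ge_0]; lra).
    apply Rmult_le_compat_l; [lra |].
    apply Rmult_le_reg_r with X; [lra |]; unfold Rdiv; rewrite Rmult_assoc, Rinv_l; lra.
Qed.

Lemma h_term_le_interp (p C th : R) :
  1 <= C -> Rpower x (2 * p) / C ^ 2 <= / k ^ 2 -> 0 <= th <= 1 ->
  h_term n alpha x k m <=
  C ^ 4 * Rpower (INR n) (2 * th) * Rpower x (1 + 2 * alpha - 2 * th * (1 + 2 * alpha + 2 * p))
    * m ^ 2 * ln x.
Proof.
  intros HC HkC Hth; unfold h_term; fold X D.
  set (a := 1 + 2 * alpha + 2 * p); set (lx := ln x) in *; set (L := ln (INR n)).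
  assert (HlnC : 0 <= ln C) by (apply ln_ge_0, HC).
  assert (HC4 : C ^ 4 = exp (4 * ln C)).
  { rewrite <- (Rpower_pow 4 C) by lra; unfold Rpower; simpl; f_equal; ring. }
  assert (Hn2 : INR n ^ 2 = exp (2 * L)).
  { unfold L; rewrite <- (Rpower_pow 2 (INR n)) by lra; unfold Rpower; simpl; f_equal; ring. }
  assert (HlnD : a * lx - 2 * ln C <= ln D).
  { replace (a * lx - 2 * ln C) with (ln (exp (a * lx) / C ^ 2)).
    2: { rewrite ln_div, ln_exp, ln_pow by first [apply exp_pos | apply pow_lt; lra | lra].
       simpl; ring. }
    apply ln_le; [apply Rdiv_lt_0_compat; [apply exp_pos | apply pow_lt; lra] |].
    apply Rle_trans with (X * (Rpower x (2 * p) / C ^ 2)); [| apply Rmult_le_compat_l; lra].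
    right; unfold X, Rpower, a, Rdiv; rewrite <- Rmult_assoc, <- exp_plus; do 2 f_equal; unfold lx; ring. }
  set (W := 2 * th * (a * lx - 2 * ln C) + 2 * (1 - th) * L).
  assert (Hden : exp W <= (D + INR n) ^ 2).
  { apply Rle_trans with (exp (th * ln D + (1 - th) * L) ^ 2).
    - replace (exp (th * ln D + (1 - th) * L) ^ 2) with (exp (2 * (th * ln D + (1 - th) * L)))
        by (simpl; rewrite Rmult_1_r, <- exp_plus; f_equal; ring).
      apply exp_le_compat; unfold W; nra.
    - apply pow_incr; split; [left; apply exp_pos | apply weighted_geom_mean_le_add; auto]. }
  assert (Hnum : 0 <= exp (2 * L) * X * m ^ 2 * lx).
  { apply Rmult_le_pos; [apply Rmult_le_pos; [apply Rmult_le_pos |] |];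
      [left; apply exp_pos | lra | apply pow2_ge_0 | auto]. }
  rewrite Hn2; apply Rle_trans with (exp (2 * L) * X * m ^ 2 * lx / exp W).
  { apply Rmult_le_compat_l; [exact Hnum |].
    apply Rinv_le_contravar; [apply exp_pos | exact Hden]. }
  unfold X, Rpower; fold lx L; rewrite HC4.
  replace (exp (2 * L) * exp ((1 + 2 * alpha) * lx) * m ^ 2 * lx / exp W)
    with (exp (2 * L + (1 + 2 * alpha) * lx - W) * (m ^ 2 * lx))
    by (unfold Rminus; rewrite !exp_plus, exp_Ropp; field; apply Rgt_not_eq, exp_pos).
  replace (exp (4 * ln C) * exp (2 * th * L) * exp ((1 + 2 * alpha - 2 * th * a) * lx)
             * m ^ 2 * lx)
    with (exp (4 * ln C + 2 * th * L + (1 + 2 * alpha - 2 * th * a) * lx) * (m ^ 2 * lx))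
    by (rewrite !exp_plus; ring).
  apply Rmult_le_compat_r; [apply Rmult_le_pos; [apply pow2_ge_0 | auto] |].
  apply exp_le_compat; unfold W; nra.
Qed.

Lemma h_term_ge (p C : R) :
  / k ^ 2 <= C ^ 2 * Rpower x (2 * p) -> Rpower x (1 + 2 * alpha + 2 * p) <= INR n ->
  Rpower x (1 + 2 * alpha) * m ^ 2 * ln x / (C ^ 2 + 1) ^ 2 <= h_term n alpha x k m.
Proof.
  intros HkC Hxn; unfold h_term; fold X D.
  assert (HD : D <= C ^ 2 * INR n).
  { apply Rle_trans with (X * (C ^ 2 * Rpower x (2 * p))); [apply Rmult_le_compat_l; lra |].
    replace (X * (C ^ 2 * Rpower x (2 * p))) with (C ^ 2 * Rpower x (1 + 2 * alpha + 2 * p))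
      by (unfold X; rewrite Rpower_plus; ring).
    apply Rmult_le_compat_l; [apply pow2_ge_0 | exact Hxn]. }
  change (Rpower x (1 + 2 * alpha)) with X.
  replace (X * m ^ 2 * ln x / (C ^ 2 + 1) ^ 2)
    with (INR n ^ 2 * X * m ^ 2 * ln x / ((C ^ 2 + 1) * INR n) ^ 2) by (field; nra).
  apply Rmult_le_compat_l.
  - apply Rmult_le_pos; [apply Rmult_le_pos; [apply Rmult_le_pos; [apply pow_le |] |] |];
      [lra | lra | apply pow2_ge_0 | auto].
  - apply Rinv_le_contravar; [apply pow_lt; nra | apply pow_incr; nra].
Qed.

End Terms.

(** * Termwise bounds in the four regimes *)

Lemma mul_exp_div_le (a B y : R) : 0 < a <= B -> y <= 0 -> a * exp (y / a) <= B * exp (y / B).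
Proof.
  intros Ha Hy; apply Rmult_le_compat; [lra | left; apply exp_pos | lra |].
  apply exp_le_compat; unfold Rdiv; apply Rmult_le_compat_neg_l; [lra |].
  apply Rinv_le_contravar; lra.
Qed.

Lemma h_term_le_sobolev_interp (p C beta : R) (n : nat) (alpha x k m e : R) :
  1 <= C -> 1 < INR n -> 1 <= x -> 0 < k -> Rpower x (2 * p) / C ^ 2 <= / k ^ 2 ->
  0 < 1 + 2 * alpha + 2 * p -> 0 <= e <= 2 * (1 + 2 * alpha + 2 * p) -> 0 < ln (INR n) ->
  1 + 2 * alpha - 2 * beta + 1 / ln (INR n) <= e ->
  h_term n alpha x k m <=
  C ^ 4 * Rpower (INR n) (e / (1 + 2 * alpha + 2 * p)) * ln (INR n) * (Rpower x (2 * beta) * m ^ 2).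
Proof.
  intros HC Hn Hx Hk HkC Ha He HL Hbe.
  set (a := 1 + 2 * alpha + 2 * p) in *; set (L := ln (INR n)) in *.
  assert (Hth : 0 <= e / (2 * a) <= 1)
    by (split; [apply Rdiv_le_0_compat | apply Rmult_le_reg_r with (2 * a);
                [| unfold Rdiv; rewrite Rmult_assoc, Rinv_l]]; lra).
  eapply Rle_trans; [apply (h_term_le_interp n alpha x k m ltac:(lra) Hx Hk p C _ HC HkC Hth) |].
  fold a; replace (2 * (e / (2 * a)) * a) with e by (field; lra).
  replace (2 * (e / (2 * a))) with (e / a) by (field; lra).
  assert (Hxe : Rpower x (1 + 2 * alpha - e) * ln x <= L * Rpower x (2 * beta))
    by (apply Rpower_mul_ln_le; lra).
  assert (0 <= C ^ 4 * Rpower (INR n) (e / a) * m ^ 2)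
    by (apply Rmult_le_pos; [apply Rmult_le_pos; [apply pow_le; lra | left; apply exp_pos] |
                             apply pow2_ge_0]).
  replace (C ^ 4 * Rpower (INR n) (e / a) * Rpower x (1 + 2 * alpha - e) * m ^ 2 * ln x)
    with (C ^ 4 * Rpower (INR n) (e / a) * m ^ 2 * (Rpower x (1 + 2 * alpha - e) * ln x)) by ring.
  replace (C ^ 4 * Rpower (INR n) (e / a) * L * (Rpower x (2 * beta) * m ^ 2))
    with (C ^ 4 * Rpower (INR n) (e / a) * m ^ 2 * (L * Rpower x (2 * beta))) by ring.
  apply Rmult_le_compat_l; assumption.
Qed.

Lemma h_term_le_sobolev (p C beta c0 : R) (n : nat) (alpha x k m : R) :
  0 <= p -> 1 <= C -> 1 < INR n -> 1 <= x -> 0 < k -> Rpower x (2 * p) / C ^ 2 <= / k ^ 2 ->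
  1 <= ln (INR n) -> 2 * c0 <= ln (INR n) -> 1 <= c0 -> 0 < alpha ->
  c0 <= (beta - alpha) * ln (INR n) ->
  h_prefactor p n alpha * h_term n alpha x k m <=
  (1 + 2 * beta + 2 * p) * C ^ 4 * exp ((1 - 2 * c0) / (1 + 2 * beta + 2 * p))
    * (Rpower x (2 * beta) * m ^ 2).
Proof.
  intros Hp HC Hn Hx Hk HkC HL1 HLc Hc0 Ha Hab.
  assert (Hba : alpha < beta) by nra.
  assert (HL1' : 1 / ln (INR n) <= 1) by (apply Rmult_le_reg_r with (ln (INR n)); [lra |];
                                          unfold Rdiv; rewrite Rmult_assoc, Rinv_l; lra).
  (* the exponent of [n] in the interpolation is chosen so that the power of [x] drops to
     [2 beta - 1/L] *)
  set (e := Rmax 0 (1 + 2 * alpha - 2 * beta + 1 / ln (INR n))).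
  assert (He : 0 <= e <= 2 * (1 + 2 * alpha + 2 * p))
    by (unfold e; split; [apply Rmax_l | apply Rmax_lub]; lra).
  pose proof (h_term_le_sobolev_interp p C beta n alpha x k m e HC Hn Hx Hk HkC ltac:(lra) He
                ltac:(lra) ltac:(apply Rmax_r)) as HT.
  rewrite h_prefactor_exp by lra.
  remember (ln (INR n)) as L eqn:EL; remember (1 + 2 * alpha + 2 * p) as a eqn:Ea;
    remember (1 + 2 * beta + 2 * p) as B eqn:EB.
  assert (HeL : (e - 1) * L <= 1 - 2 * c0).
  { unfold e; apply Rmax_case; [lra |].
    replace ((1 + 2 * alpha - 2 * beta + 1 / L - 1) * L) with (2 * (alpha - beta) * L + 1)
      by (field; lra); lra. }
  eapply Rle_trans; [apply Rmult_le_compat_l; [| exact HT] |].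
  { apply Rdiv_le_0_compat; [apply Rmult_le_pos; [lra | left; apply exp_pos] | lra]. }
  replace (a * exp (- L / a) / L * (C ^ 4 * Rpower (INR n) (e / a) * L * (Rpower x (2 * beta) * m ^ 2)))
    with (a * exp ((e - 1) * L / a) * C ^ 4 * (Rpower x (2 * beta) * m ^ 2)).
  2: { unfold Rpower; rewrite <- EL; replace ((e - 1) * L / a) with (- L / a + e / a * L)
         by (field; lra); rewrite exp_plus; field; lra. }
  replace (B * C ^ 4 * exp ((1 - 2 * c0) / B)) with (B * exp ((1 - 2 * c0) / B) * C ^ 4) by ring.
  apply Rmult_le_compat_r; [apply Rmult_le_pos; [left; apply exp_pos | apply pow2_ge_0] |].
  apply Rmult_le_compat_r; [apply pow_le; lra |].
  apply Rle_trans with (a * exp ((1 - 2 * c0) / a)).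
  - apply Rmult_le_compat_l; [lra | apply exp_le_compat; unfold Rdiv;
      apply Rmult_le_compat_r; [left; apply Rinv_0_lt_compat |]; lra].
  - apply mul_exp_div_le; lra.
Qed.

Lemma Rpower_le_exp_mul (x q g : R) : 1 <= x -> 0 < q -> 0 < g ->
  Rpower x q <= exp (q * ln (q / (2 * g))) * exp (2 * g * x).
Proof.
  intros Hx Hq Hg; rewrite <- exp_plus; apply exp_le_compat.
  set (y := q / (2 * g)); assert (Hy : 0 < y) by (apply Rdiv_lt_0_compat; lra).
  pose proof (ln_le_sub_1 (x / y) ltac:(apply Rdiv_lt_0_compat; lra)) as H.
  rewrite ln_div in H by lra.
  replace (2 * g * x) with (q * (x / y)) by (unfold y; field; lra).
  assert (q * (ln x - ln y) <= q * (x / y - 1)) by (apply Rmult_le_compat_l; lra); nra.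
Qed.

Lemma h_term_le_analytic (p C g : R) (n : nat) (alpha x k m : R) :
  1 <= C -> 1 < INR n -> 1 <= x -> 0 < k -> Rpower x (2 * p) / C ^ 2 <= / k ^ 2 ->
  0 <= alpha -> 0 < g ->
  h_term n alpha x k m <=
  C ^ 4 * exp ((2 + 2 * alpha) * ln ((2 + 2 * alpha) / (2 * g))) * (exp (2 * g * x) * m ^ 2).
Proof.
  intros HC Hn Hx Hk HkC Ha Hg.
  eapply Rle_trans; [apply (h_term_le_interp n alpha x k m ltac:(lra) Hx Hk p C 0); lra |].
  rewrite Rmult_0_r, Rmult_0_l, Rminus_0_r, Rpower_O by lra.
  assert (HxX : Rpower x (1 + 2 * alpha) * ln x <= Rpower x (2 + 2 * alpha)).
  { replace (2 + 2 * alpha) with (1 + 2 * alpha + 1) by ring.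
    rewrite (Rpower_plus (1 + 2 * alpha) 1 x), (Rpower_1 x) by lra.
    apply Rmult_le_compat_l; [left; apply exp_pos | pose proof (ln_le_sub_1 x); lra]. }
  pose proof (Rpower_le_exp_mul x (2 + 2 * alpha) g Hx ltac:(lra) Hg).
  assert (0 <= C ^ 4) by (apply pow_le; lra).
  assert (0 <= m ^ 2) by apply pow2_ge_0.
  replace (C ^ 4 * 1 * Rpower x (1 + 2 * alpha) * m ^ 2 * ln x)
    with (C ^ 4 * m ^ 2 * (Rpower x (1 + 2 * alpha) * ln x)) by ring.
  replace (C ^ 4 * exp ((2 + 2 * alpha) * ln ((2 + 2 * alpha) / (2 * g))) * (exp (2 * g * x) * m ^ 2))
    with (C ^ 4 * m ^ 2 * (exp ((2 + 2 * alpha) * ln ((2 + 2 * alpha) / (2 * g))) * exp (2 * g * x)))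
    by ring.
  apply Rmult_le_compat_l; [apply Rmult_le_pos |]; lra.
Qed.

Lemma mul_ln_div_le (q s g : R) : 0 < g -> 0 < q -> 1 <= s -> q <= 8 * s -> q * ln s <= 4 * s ->
  q * ln (q / (2 * g)) <= s * (8 * ln (8 * Rmax 1 (/ (2 * g))) + 4).
Proof.
  intros Hg Hq Hs Hq8 Hqs; set (M := Rmax 1 (/ (2 * g))).
  assert (HM1 : 1 <= M) by apply Rmax_l.
  assert (HMg : / (2 * g) <= M) by apply Rmax_r.
  assert (H8M : 0 <= ln (8 * M)) by (apply ln_ge_0; lra).
  assert (Hln : ln (q / (2 * g)) <= ln (8 * M) + ln s).
  { rewrite <- ln_mult by lra; apply ln_le; [apply Rdiv_lt_0_compat; lra |].
    unfold Rdiv; apply Rle_trans with (q * M); [apply Rmult_le_compat_l; lra | nra]. }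
  apply Rle_trans with (q * ln (8 * M) + q * ln s); [nra |].
  assert (q * ln (8 * M) <= 8 * s * ln (8 * M)) by (apply Rmult_le_compat_r; lra); lra.
Qed.

(* With [s = sqrt L] and [lam = ln L], the prefactor decays like [exp (- s lam / A)] while the
   constant of the analytic bound only grows like [exp (O (s))]. *)
Lemma analytic_exponent_le (p g : R) : 0 <= p -> 0 < g ->
  exists T : R, forall L alpha : R, T <= L -> 0 < alpha <= sqrt L / ln L ->
  (1 + 2 * alpha + 2 * p) / L <= 1 /\
  - L / (1 + 2 * alpha + 2 * p) + (2 + 2 * alpha) * ln ((2 + 2 * alpha) / (2 * g)) <= - sqrt L.
Proof.
  intros Hp Hg.
  set (A := 4 * (1 + 2 * p)); set (M := Rmax 1 (/ (2 * g))); set (Z := 8 * ln (8 * M) + 5).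
  exists (Rmax (exp 1) (Rmax (A ^ 2) (exp (A * Z)))).
  intros L alpha HT [Ha Hau].
  assert (HLe : exp 1 <= L) by (eapply Rle_trans; [apply Rmax_l | exact HT]).
  assert (HLA : A ^ 2 <= L) by (eapply Rle_trans; [| exact HT];
                                eapply Rle_trans; [apply Rmax_l | apply Rmax_r]).
  assert (HLZ : exp (A * Z) <= L) by (eapply Rle_trans; [| exact HT];
                                      eapply Rle_trans; [apply Rmax_r | apply Rmax_r]).
  assert (He1 : 2 <= exp 1) by (pose proof (exp_ineq1_le 1); lra).
  assert (HL0 : 0 < L) by lra.
  remember (sqrt L) as s eqn:Es; remember (ln L) as lam eqn:Elam.
  assert (Hss : s * s = L) by (rewrite Es; apply sqrt_sqrt; lra).
  assert (Hs0 : 0 <= s) by (rewrite Es; apply sqrt_pos).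
  assert (Hlam1 : 1 <= lam) by (rewrite Elam, <- (ln_exp 1); apply ln_le; lra).
  assert (HlamZ : A * Z <= lam)
    by (rewrite Elam, <- (ln_exp (A * Z)); apply ln_le; [apply exp_pos | lra]).
  assert (HA4 : 4 <= A) by (unfold A; lra).
  assert (HsA : A <= s) by (destruct (Rle_lt_dec A s); [lra | nra]).
  assert (Hlam2s : lam <= 2 * s) by (rewrite Elam, Es; apply ln_le_2_sqrt; lra).
  assert (Hlns : ln s = lam / 2) by (rewrite Elam, <- Hss, ln_mult by lra; field).
  assert (Halam : alpha * lam <= s)
    by (apply Rmult_le_reg_r with (/ lam); [apply Rinv_0_lt_compat; lra |];
        replace (alpha * lam * / lam) with alpha by (field; lra); exact Hau).
  remember (1 + 2 * alpha + 2 * p) as a eqn:Ea; remember (2 + 2 * alpha) as q eqn:Eq.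
  assert (Hlamq : a * lam <= A * s) by (unfold A; nra).
  split.
  { assert (a <= a * lam) by nra; assert (A * s <= s * s) by nra.
    apply Rmult_le_reg_r with L; [lra |]; unfold Rdiv; rewrite Rmult_assoc, Rinv_l by lra; lra. }
  assert (HLa : - L / a <= - s * Z).
  { apply Rle_trans with (- (s * lam) / A).
    - unfold Rdiv; rewrite !Ropp_mult_distr_l_reverse; apply Ropp_le_contravar.
      apply Rmult_le_reg_r with (a * A); [nra |].
      replace (s * lam * / A * (a * A)) with (s * (a * lam)) by (field; lra).
      replace (L * / a * (a * A)) with (L * A) by (field; lra); nra.
    - apply Rmult_le_reg_r with A; [lra |].
      unfold Rdiv; rewrite Rmult_assoc, Rinv_l by lra; nra. }
  assert (Hq8 : q <= 8 * s) by nra.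
  assert (Hq : q * ln (q / (2 * g)) <= s * (8 * ln (8 * M) + 4))
    by (apply mul_ln_div_le; [lra | lra | lra | lra | rewrite Hlns; nra]).
  unfold Z in *; lra.
Qed.

Lemma analytic_prefactor_small (p g l K : R) : 0 <= p -> 0 < g -> 0 < l -> 0 < K ->
  exists T : R, forall L alpha : R, T <= L -> 0 < alpha <= sqrt L / ln L ->
  (1 + 2 * alpha + 2 * p) * exp (- L / (1 + 2 * alpha + 2 * p)) / L *
    exp ((2 + 2 * alpha) * ln ((2 + 2 * alpha) / (2 * g))) * K <= l.
Proof.
  intros Hp Hg Hl HK; destruct (analytic_exponent_le p g Hp Hg) as [T HT].
  exists (Rmax (Rmax T 1) (ln (K / l) ^ 2)); intros L alpha HL Halpha.
  assert (HLT : T <= L) by (eapply Rle_trans; [| exact HL];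
                            eapply Rle_trans; [apply Rmax_l | apply Rmax_l]).
  assert (HL1 : 1 <= L) by (eapply Rle_trans; [| exact HL];
                            eapply Rle_trans; [apply Rmax_r | apply Rmax_l]).
  assert (HLK : ln (K / l) ^ 2 <= L) by (eapply Rle_trans; [apply Rmax_r | exact HL]).
  destruct (HT L alpha HLT Halpha) as [HaL Hexp].
  assert (HsK : ln (K / l) <= sqrt L).
  { destruct (Rle_lt_dec (ln (K / l)) 0); [pose proof (sqrt_pos L); lra |].
    rewrite <- (sqrt_pow2 (ln (K / l))) by lra; apply sqrt_le_1_alt, HLK. }
  assert (HsKl : exp (- sqrt L) * K <= l).
  { apply Rle_trans with (exp (- ln (K / l)) * K).
    - apply Rmult_le_compat_r; [lra | apply exp_le_compat; lra].
    - rewrite exp_Ropp, exp_ln by (apply Rdiv_lt_0_compat; lra); right; field; lra. }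
  set (a := 1 + 2 * alpha + 2 * p) in *; set (q := 2 + 2 * alpha) in *.
  replace (a * exp (- L / a) / L * exp (q * ln (q / (2 * g))) * K)
    with (a / L * (exp (- L / a + q * ln (q / (2 * g))) * K)) by (rewrite exp_plus; field; lra).
  apply Rle_trans with (1 * (exp (- sqrt L) * K)); [| lra].
  apply Rmult_le_compat; [apply Rdiv_le_0_compat; unfold a; lra |
    apply Rmult_le_pos; [left; apply exp_pos | lra] | exact HaL |].
  apply Rmult_le_compat_r; [lra | apply exp_le_compat, Hexp].
Qed.

Lemma h_term_ge_poly_decay (p C c g : R) (n : nat) (alpha x k mx y : R) :
  0 < c -> 0 < INR n -> 1 <= y <= x -> 0 < k -> / k ^ 2 <= C ^ 2 * Rpower x (2 * p) ->
  Rpower x (1 + 2 * alpha + 2 * p) <= INR n -> g <= alpha ->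
  mx >= c * Rpower x (- g - 1 / 2) ->
  c ^ 2 * Rpower y (2 * (alpha - g)) * ln y / (C ^ 2 + 1) ^ 2 <= h_term n alpha x k mx.
Proof.
  intros Hc Hn Hy Hk HkC Hxn Hga Hmx.
  eapply Rle_trans; [| apply (h_term_ge n alpha x k mx Hn ltac:(lra) Hk p C HkC Hxn)].
  unfold Rdiv; apply Rmult_le_compat_r; [left; apply Rinv_0_lt_compat, pow_lt; nra |].
  assert (Hr : 0 < Rpower x (- g - 1 / 2)) by apply exp_pos.
  assert (Hxg : Rpower x (1 + 2 * alpha) * (c * Rpower x (- g - 1 / 2)) ^ 2
                = c ^ 2 * Rpower x (2 * (alpha - g))).
  { unfold Rpower; simpl; rewrite Rmult_1_r.
    replace (exp ((1 + 2 * alpha) * ln x) * (c * exp ((- g - 1 / 2) * ln x) *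
              (c * exp ((- g - 1 / 2) * ln x))))
      with (c * c * (exp ((1 + 2 * alpha) * ln x) * exp ((- g - 1 / 2) * ln x) *
              exp ((- g - 1 / 2) * ln x))) by ring.
    rewrite <- !exp_plus, Rmult_1_r. f_equal; apply f_equal; field. }
  assert (Hyx : c ^ 2 * Rpower y (2 * (alpha - g)) <= Rpower x (1 + 2 * alpha) * mx ^ 2).
  { apply Rle_trans with (Rpower x (1 + 2 * alpha) * (c * Rpower x (- g - 1 / 2)) ^ 2).
    - rewrite Hxg; apply Rmult_le_compat_l; [nra | apply Rle_Rpower_l; lra].
    - apply Rmult_le_compat_l; [left; apply exp_pos | apply pow_incr; nra]. }
  apply Rmult_le_compat; [apply Rmult_le_pos; [nra | left; apply exp_pos] |
                          apply ln_ge_0; lra | exact Hyx | apply ln_le; lra].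
Qed.

(* With [alpha = g + eps], [eps = C0 ln L / L] and [m = n^(1/a)], the gain [(m/2)^(2 eps)] is at
   least [exp (C0 ln L / a) >= L^3], which beats the threshold [Lam L^2] of [alpha_upper]. *)
Lemma poly_decay_scale (p g L : R) : 0 <= p -> 0 < g -> 1 <= L ->
  16 * (3 * (2 + 2 * g + 2 * p)) ^ 2 <= L -> 6 * (2 + 2 * g + 2 * p) <= L ->
  let alpha := g + 3 * (2 + 2 * g + 2 * p) * ln L / L in
  let a := 1 + 2 * alpha + 2 * p in
  g <= alpha /\ 8 <= exp (L / a) /\ L / (2 * a) <= ln (exp (L / a) / 2) /\
  L ^ 3 <= Rpower (exp (L / a) / 2) (2 * (alpha - g)).
Proof.
  intros Hp Hg HL1 HLB HL6 alpha a.
  set (B := 2 + 2 * g + 2 * p) in *; set (lL := ln L) in *.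
  assert (HB : 2 <= B) by (unfold B; lra).
  assert (HlL : 0 <= lL) by (apply ln_ge_0, HL1).
  assert (Heps : 2 * (3 * B * lL) <= L).
  { assert (lL <= 2 * sqrt L) by (apply ln_le_2_sqrt; lra).
    assert (12 * B <= sqrt L) by (rewrite <- (sqrt_pow2 (12 * B)) by lra; apply sqrt_le_1_alt; nra).
    pose proof (sqrt_sqrt L ltac:(lra)); nra. }
  set (eps := 3 * B * lL / L) in *.
  assert (Heps0 : 0 <= eps) by (apply Rdiv_le_0_compat; nra).
  assert (Heps1 : 2 * eps <= 1)
    by (unfold eps; apply Rmult_le_reg_r with L; [lra |]; field_simplify; lra).
  assert (HaB : 1 <= a <= B) by (unfold a, alpha, B; lra).
  assert (HLa : 6 <= L / a)
    by (apply Rmult_le_reg_r with a; [lra |]; unfold Rdiv; rewrite Rmult_assoc, Rinv_l; nra).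
  set (m := exp (L / a)).
  assert (Hln2 : ln 2 <= 1) by (pose proof (ln_le_sub_1 2); lra).
  assert (Hlnm : ln (m / 2) = L / a - ln 2)
    by (unfold m; rewrite ln_div, ln_exp by (apply exp_pos || lra); reflexivity).
  assert (HL2a : L / (2 * a) <= ln (m / 2))
    by (rewrite Hlnm; unfold Rdiv in *; rewrite Rinv_mult; lra).
  split; [unfold alpha; lra | split; [| split; [exact HL2a |]]].
  - assert (2 ^ 3 <= (L / a / 3) ^ 3) by (apply pow_incr; lra).
    pose proof (exp_ge_cube (L / a) ltac:(lra)); unfold m; lra.
  - replace (L ^ 3) with (exp (3 * lL))
      by (unfold lL; rewrite <- (Rpower_pow 3 L) by lra; unfold Rpower; simpl; f_equal; ring).
    apply exp_le_compat; replace (2 * (alpha - g)) with (2 * eps) by (unfold alpha; ring).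
    apply Rle_trans with (2 * eps * (L / (2 * a))); [| apply Rmult_le_compat_l; lra].
    replace (2 * eps * (L / (2 * a))) with (B / a * (3 * lL)) by (unfold eps; field; lra).
    rewrite <- (Rmult_1_l (3 * lL)) at 1; apply Rmult_le_compat_r; [lra |].
    apply Rmult_le_reg_r with a; [lra |]; unfold Rdiv; rewrite Rmult_assoc, Rinv_l; lra.
Qed.

(** * Bounds on h_n and on the thresholds *)

Lemma alpha_lower_ge (p : R) (kappa mu : nat -> R) (l : R) (n : nat) (y : R) :
  y <= sqrt (ln (INR n)) ->
  (forall alpha, 0 < alpha -> alpha < y -> h_fun p kappa mu n alpha <= l) ->
  Rbar_le y (alpha_lower p kappa mu l n).
Proof.
  intros Hy Hh; apply (Rbar_min_case _ _ (Rbar_le y)); [| exact Hy].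
  apply Glb_Rbar_ge_of_lb; intros alpha [Ha Hgt].
  destruct (Rle_lt_dec y alpha) as [| Hlt]; [assumption |].
  specialize (Hh alpha Ha Hlt); lra.
Qed.

Lemma alpha_upper_le (p : R) (kappa mu : nat -> R) (L : R) (n : nat) (alpha y : R) :
  0 < alpha -> alpha <= y -> L * ln (INR n) ^ 2 < h_fun p kappa mu n alpha ->
  Rbar_le (alpha_upper p kappa mu L n) y.
Proof. intros Ha Hy Hh; apply Glb_Rbar_le_of_mem with alpha; [split |]; lra. Qed.

Section Weights.

Variables (p C : R) (kappa : nat -> R).
Hypotheses (Hp : 0 <= p) (HC : 1 <= C)
  (Hkappa : forall i : nat, (1 <= i)%nat ->
     / C * Rpower (INR i) (- p) <= kappa i /\ kappa i <= C * Rpower (INR i) (- p)).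

Let kappa_bounds (i : nat) : (1 <= i)%nat ->
  0 < kappa i /\ Rpower (INR i) (2 * p) / C ^ 2 <= / kappa i ^ 2 <= C ^ 2 * Rpower (INR i) (2 * p).
Proof. intros Hi; apply weight_inv_sq_bounds, Hkappa, Hi; lra. Qed.

Let INR_S_ge_1 (k : nat) : 1 <= INR (S k).
Proof. rewrite S_INR; pose proof (pos_INR k); lra. Qed.

Lemma h_terms_nonneg (mu : nat -> R) (n : nat) (alpha : R) :
  0 < INR n -> forall k, 0 <= h_terms kappa mu n alpha k.
Proof. intros Hn k; apply h_term_nonneg; auto; apply kappa_bounds; lia. Qed.

Lemma ex_series_h_terms (mu : nat -> R) (n : nat) (alpha : R) :
  in_l2 mu -> 0 < INR n -> 0 <= alpha -> ex_series (h_terms kappa mu n alpha).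
Proof.
  intros Hmu Hn Ha.
  apply (@ex_series_le R_AbsRing R_CompleteNormedModule _ (fun k => (INR n) ^ 2 * C ^ 4 * (mu (S k)) ^ 2)).
  - intros k; change (norm _) with (Rabs (h_terms kappa mu n alpha k)).
    rewrite Rabs_pos_eq by (apply h_terms_nonneg, Hn).
    destruct (kappa_bounds (S k) ltac:(lia)) as [Hk [HkC _]].
    apply h_term_le_sq_weight; auto; [lra |].
    eapply Rle_trans; [| exact HkC]; unfold Rdiv; rewrite Rmult_comm.
    rewrite <- (Rmult_1_r (/ C ^ 2)) at 1; apply Rmult_le_compat_l;
      [left; apply Rinv_0_lt_compat, pow_lt; lra |].
    rewrite <- (Rpower_O (INR (S k))) by (pose proof (INR_S_ge_1 k); lra).
    apply Rle_Rpower; [apply INR_S_ge_1 | lra].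
  - apply (@ex_series_scal_l R_AbsRing R_NormedModule), Hmu.
Qed.

Lemma h_fun_le_of_terms_le (mu v : nat -> R) (n : nat) (alpha K : R) :
  in_l2 mu -> 1 < INR n -> 0 < alpha -> ex_series v ->
  (forall k, h_prefactor p n alpha * h_terms kappa mu n alpha k <= K * v k) ->
  h_fun p kappa mu n alpha <= K * Series v.
Proof.
  intros Hmu Hn Ha Hv Hbound; rewrite h_fun_eq.
  assert (HP : 0 < h_prefactor p n alpha) by (apply h_prefactor_pos; lra).
  replace (K * Series v) with (h_prefactor p n alpha * (K / h_prefactor p n alpha * Series v))
    by (field; lra).
  apply Rmult_le_compat_l; [lra |]; apply Series_le_scal; [intros k; split | exact Hv].
  - apply h_terms_nonneg; lra.
  - apply Rmult_le_reg_l with (h_prefactor p n alpha); [exact HP |].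
    replace (h_prefactor p n alpha * (K / h_prefactor p n alpha * v k)) with (K * v k)
      by (field; lra); apply Hbound.
Qed.

Lemma h_fun_le_sobolev (mu : nat -> R) (n : nat) (alpha beta c0 Rad : R) :
  in_l2 mu -> sobolev_ball beta Rad mu -> 1 < INR n ->
  1 <= ln (INR n) -> 2 * c0 <= ln (INR n) -> 1 <= c0 -> 0 < alpha ->
  c0 <= (beta - alpha) * ln (INR n) ->
  h_fun p kappa mu n alpha <=
  (1 + 2 * beta + 2 * p) * C ^ 4 * exp ((1 - 2 * c0) / (1 + 2 * beta + 2 * p)) * Rad ^ 2.
Proof.
  intros Hmu [Hex Hball] Hn HL1 HLc Hc0 Ha Hab.
  assert (Hv : forall k, 0 <= Rpower (INR (S k)) (2 * beta) * mu (S k) ^ 2)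
    by (intros k; apply Rmult_le_pos; [left; apply exp_pos | apply pow2_ge_0]).
  set (K := (1 + 2 * beta + 2 * p) * C ^ 4 * exp ((1 - 2 * c0) / (1 + 2 * beta + 2 * p))).
  apply Rle_trans with (K * Series (fun k => Rpower (INR (S k)) (2 * beta) * mu (S k) ^ 2)).
  - apply h_fun_le_of_terms_le; auto.
    intros k; destruct (kappa_bounds (S k) ltac:(lia)) as [Hk [HkC _]].
    apply h_term_le_sobolev; first [assumption | apply INR_S_ge_1].
  - assert (alpha < beta) by nra.
    apply Rmult_le_compat_l; [| apply Series_le_sqr_of_sqrt_le; auto].
    unfold K; apply Rmult_le_pos; [apply Rmult_le_pos; [| apply pow_le] | left; apply exp_pos]; lra.
Qed.

Lemma alpha_lower_ge_sobolev (l beta Rad : R) : 0 < l -> 0 < beta -> 0 < Rad ->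
  exists c0 : R, 0 < c0 /\ exists N : nat, forall n : nat, (N <= n)%nat ->
    forall mu : nat -> R, in_l2 mu -> sobolev_ball beta Rad mu ->
      Rbar_le (beta - c0 / ln (INR n)) (alpha_lower p kappa mu l n).
Proof.
  intros Hl Hb HR.
  set (B := 1 + 2 * beta + 2 * p); set (K := B * C ^ 4 * Rad ^ 2).
  assert (HK : 0 < K) by (apply Rmult_lt_0_compat; [apply Rmult_lt_0_compat; [unfold B |
    apply pow_lt] | apply pow_lt]; lra).
  set (c0 := 1 + B * Rabs (ln (l / K)) / 2).
  assert (HBy : 0 <= B * Rabs (ln (l / K))) by (apply Rmult_le_pos; [unfold B; lra | apply Rabs_pos]).
  assert (Hsmall : K * exp ((1 - 2 * c0) / B) <= l).
  { apply Rle_trans with (K * (l / K)); [apply Rmult_le_compat_l; [lra |] | right; field; lra].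
    rewrite <- (exp_ln (l / K)) by (apply Rdiv_lt_0_compat; lra); apply exp_le_compat.
    replace ((1 - 2 * c0) / B) with (- / B - Rabs (ln (l / K))) by (unfold c0, B; field; lra).
    pose proof (Rle_abs (- ln (l / K))); rewrite Rabs_Ropp in *.
    assert (0 < / B) by (apply Rinv_0_lt_compat; unfold B; lra); unfold Rdiv in *; lra. }
  exists c0; split; [unfold c0; lra |].
  destruct (ln_INR_eventually_ge (Rmax (Rmax 1 (2 * c0)) (beta ^ 2))) as [N HN].
  exists N; intros n Hn mu Hmu Hball; destruct (HN n Hn) as [HL Hn1].
  assert (HL1 : 1 <= ln (INR n)) by (eapply Rle_trans; [apply Rmax_l | eapply Rle_trans;
                                     [apply Rmax_l | exact HL]]).
  assert (HLc : 2 * c0 <= ln (INR n)) by (eapply Rle_trans; [apply Rmax_r | eapply Rle_trans;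
                                          [apply Rmax_l | exact HL]]).
  assert (HLb : beta ^ 2 <= ln (INR n)) by (eapply Rle_trans; [apply Rmax_r | exact HL]).
  assert (0 <= c0 / ln (INR n)) by (apply Rdiv_le_0_compat; unfold c0 in *; lra).
  apply alpha_lower_ge.
  - assert (beta <= sqrt (ln (INR n))) by (rewrite <- (sqrt_pow2 beta) by lra;
                                          apply sqrt_le_1_alt, HLb); lra.
  - intros alpha Ha Hlt.
    assert (Hab : c0 <= (beta - alpha) * ln (INR n)).
    { apply Rmult_le_reg_r with (/ ln (INR n)); [apply Rinv_0_lt_compat; lra |].
      replace ((beta - alpha) * ln (INR n) * / ln (INR n)) with (beta - alpha) by (field; lra).
      unfold Rdiv in Hlt; lra. }
    eapply Rle_trans; [apply (h_fun_le_sobolev mu n alpha beta c0 Rad); auto; unfold c0; lra |].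
    fold B; replace (B * C ^ 4 * exp ((1 - 2 * c0) / B) * Rad ^ 2)
      with (K * exp ((1 - 2 * c0) / B)) by (unfold K; ring); exact Hsmall.
Qed.

Lemma alpha_lower_ge_analytic (l g Rad : R) : 0 < l -> 0 < g -> 0 < Rad ->
  exists N : nat, forall n : nat, (N <= n)%nat ->
    forall mu : nat -> R, in_l2 mu -> analytic_ball g Rad mu ->
      Rbar_le (sqrt (ln (INR n)) / ln (ln (INR n))) (alpha_lower p kappa mu l n).
Proof.
  intros Hl Hg HR.
  assert (HK : 0 < C ^ 4 * Rad ^ 2) by (apply Rmult_lt_0_compat; apply pow_lt; lra).
  destruct (analytic_prefactor_small p g l (C ^ 4 * Rad ^ 2) Hp Hg Hl HK) as [T HT].
  destruct (ln_INR_eventually_ge (Rmax T (exp 1))) as [N HN].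
  exists N; intros n Hn mu Hmu [Hex Hball]; destruct (HN n Hn) as [HL Hn1].
  assert (HLT : T <= ln (INR n)) by (eapply Rle_trans; [apply Rmax_l | exact HL]).
  assert (HLe : exp 1 <= ln (INR n)) by (eapply Rle_trans; [apply Rmax_r | exact HL]).
  assert (Hlam : 1 <= ln (ln (INR n)))
    by (rewrite <- (ln_exp 1); apply ln_le; [apply exp_pos | exact HLe]).
  assert (Hv : forall k, 0 <= exp (2 * g * INR (S k)) * mu (S k) ^ 2)
    by (intros k; apply Rmult_le_pos; [left; apply exp_pos | apply pow2_ge_0]).
  apply alpha_lower_ge.
  - pose proof (sqrt_pos (ln (INR n))).
    apply Rmult_le_reg_r with (ln (ln (INR n))); [lra |].
    unfold Rdiv; rewrite Rmult_assoc, Rinv_l by lra; nra.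
  - intros alpha Ha Hlt.
    set (E := exp ((2 + 2 * alpha) * ln ((2 + 2 * alpha) / (2 * g)))).
    assert (HP : 0 < h_prefactor p n alpha) by (apply h_prefactor_pos; lra).
    apply Rle_trans with
      (h_prefactor p n alpha * C ^ 4 * E * Series (fun k => exp (2 * g * INR (S k)) * mu (S k) ^ 2)).
    + apply h_fun_le_of_terms_le; auto.
      intros k; destruct (kappa_bounds (S k) ltac:(lia)) as [Hk [HkC _]].
      replace (h_prefactor p n alpha * C ^ 4 * E * (exp (2 * g * INR (S k)) * mu (S k) ^ 2))
        with (h_prefactor p n alpha * (C ^ 4 * E * (exp (2 * g * INR (S k)) * mu (S k) ^ 2)))
        by ring.
      apply Rmult_le_compat_l; [lra |].
      apply (h_term_le_analytic p); first [assumption | apply INR_S_ge_1 | lra].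
    + eapply Rle_trans; [apply Rmult_le_compat_l; [| apply Series_le_sqr_of_sqrt_le; eauto] |].
      { apply Rmult_le_pos; [apply Rmult_le_pos; [| apply pow_le] | left; apply exp_pos]; lra. }
      rewrite h_prefactor_exp by lra.
      replace ((1 + 2 * alpha + 2 * p) * exp (- ln (INR n) / (1 + 2 * alpha + 2 * p)) / ln (INR n)
                 * C ^ 4 * E * Rad ^ 2)
        with ((1 + 2 * alpha + 2 * p) * exp (- ln (INR n) / (1 + 2 * alpha + 2 * p)) / ln (INR n)
                 * E * (C ^ 4 * Rad ^ 2)) by ring.
      apply HT; lra.
Qed.

(* The indices [i] in [[m/2, m]], where [m = n^(1/a)], have [i^a <= n]: for them the
   denominator of the term is of order [n], and there are about [m/4] of them. *)
Lemma h_fun_ge_poly_decay (mu : nat -> R) (c g : R) (n : nat) (alpha : R) :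
  0 < c -> in_l2 mu -> (forall i, (1 <= i)%nat -> mu i >= c * Rpower (INR i) (- g - 1 / 2)) ->
  1 < INR n -> g <= alpha -> 0 < alpha ->
  let a := 1 + 2 * alpha + 2 * p in let m := exp (ln (INR n) / a) in
  8 <= m -> ln (INR n) / (2 * a) <= ln (m / 2) ->
  c ^ 2 * Rpower (m / 2) (2 * (alpha - g)) / (8 * (C ^ 2 + 1) ^ 2) <= h_fun p kappa mu n alpha.
Proof.
  intros Hc Hmu Hmuc Hn Hg Ha a m Hm8 Hlnm.
  assert (HL : 0 < ln (INR n)) by (rewrite <- ln_1; apply ln_increasing; lra).
  assert (Hma : Rpower m a = INR n)
    by (unfold Rpower, m; rewrite ln_exp; replace (a * (ln (INR n) / a)) with (ln (INR n))
          by (field; unfold a; lra); apply exp_ln; lra).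
  set (b := c ^ 2 * Rpower (m / 2) (2 * (alpha - g)) * ln (m / 2) / (C ^ 2 + 1) ^ 2).
  assert (Hb : 0 <= b).
  { apply Rdiv_le_0_compat; [| apply pow_lt; nra].
    apply Rmult_le_pos; [apply Rmult_le_pos; [nra | left; apply exp_pos] | apply ln_ge_0; lra]. }
  assert (HS : m / 4 * b <= Series (h_terms kappa mu n alpha)).
  { apply Series_ge_range; auto.
    - apply h_terms_nonneg; auto; lra.
    - apply ex_series_h_terms; auto; lra.
    - intros k Hk; destruct (kappa_bounds (S k) ltac:(lia)) as [Hk0 [_ HkC]].
      apply (h_term_ge_poly_decay p C c g); auto; [lra | lra | | apply Hmuc; lia].
      rewrite <- Hma; apply Rle_Rpower_l; [unfold a |]; lra. }
  rewrite h_fun_eq, h_prefactor_exp by lra; fold a.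
  assert (Hexp : exp (- ln (INR n) / a) = / m)
    by (unfold m; rewrite <- exp_Ropp; f_equal; field; unfold a; lra).
  rewrite Hexp.
  apply Rle_trans with (a * / m / ln (INR n) * (m / 4 * b));
    [| apply Rmult_le_compat_l; [apply Rdiv_le_0_compat; [apply Rmult_le_pos; [unfold a |
       left; apply Rinv_0_lt_compat] |] |]; lra].
  replace (a * / m / ln (INR n) * (m / 4 * b))
    with (c ^ 2 * Rpower (m / 2) (2 * (alpha - g)) / (8 * (C ^ 2 + 1) ^ 2) *
          (2 * a * ln (m / 2) / ln (INR n))) by (unfold b; field; repeat split; nra).
  rewrite <- (Rmult_1_r (c ^ 2 * Rpower (m / 2) (2 * (alpha - g)) / (8 * (C ^ 2 + 1) ^ 2))) at 1.
  apply Rmult_le_compat_l.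
  - apply Rdiv_le_0_compat; [apply Rmult_le_pos; [nra | left; apply exp_pos] | apply Rmult_lt_0_compat; [| apply pow_lt]; nra].
  - apply Rmult_le_reg_r with (ln (INR n) / (2 * a)); [apply Rdiv_lt_0_compat; unfold a; lra |].
    replace (2 * a * ln (m / 2) / ln (INR n) * (ln (INR n) / (2 * a))) with (ln (m / 2))
      by (field; unfold a; lra); lra.
Qed.

Lemma alpha_upper_le_poly_decay (c g : R) : 0 < c -> 0 < g ->
  exists C0 : R, 0 < C0 /\
  forall Lam : R, 0 < Lam -> forall mu : nat -> R, in_l2 mu ->
    (forall i : nat, (1 <= i)%nat -> mu i >= c * Rpower (INR i) (- g - 1 / 2)) ->
    exists N : nat, forall n : nat, (N <= n)%nat ->
      Rbar_le (alpha_upper p kappa mu Lam n) (g + C0 * ln (ln (INR n)) / ln (INR n)).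
Proof.
  intros Hc Hg; set (B := 2 + 2 * g + 2 * p); exists (3 * B); split; [unfold B; lra |].
  intros Lam HLam mu Hmu Hmuc.
  set (Q := 8 * (C ^ 2 + 1) ^ 2 * Lam / c ^ 2).
  destruct (ln_INR_eventually_ge (Rmax (Rmax 1 (16 * (3 * B) ^ 2)) (Rmax (6 * B) (Q + 1))))
    as [N HN].
  exists N; intros n Hn; destruct (HN n Hn) as [HL Hn1].
  set (L := ln (INR n)) in *.
  assert (HL1 : 1 <= L) by (eapply Rle_trans; [eapply Rle_trans; [apply Rmax_l | apply Rmax_l] | exact HL]).
  assert (HLB : 16 * (3 * B) ^ 2 <= L) by (eapply Rle_trans; [eapply Rle_trans; [apply Rmax_r | apply Rmax_l] | exact HL]).
  assert (HL6 : 6 * B <= L) by (eapply Rle_trans; [eapply Rle_trans; [apply Rmax_l | apply Rmax_r] | exact HL]).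
  assert (HLQ : Q + 1 <= L) by (eapply Rle_trans; [eapply Rle_trans; [apply Rmax_r | apply Rmax_r] | exact HL]).
  destruct (poly_decay_scale p g L Hp Hg HL1 HLB HL6) as [Hga [Hm8 [HL2a Hpow]]].
  fold B in Hga, Hm8, HL2a, Hpow.
  set (alpha := g + 3 * B * ln L / L) in *.
  apply alpha_upper_le with alpha; [lra | right; reflexivity |].
  eapply Rlt_le_trans; [| apply (h_fun_ge_poly_decay mu c g); auto; lra]; fold L.
  apply Rlt_le_trans with (c ^ 2 * L ^ 3 / (8 * (C ^ 2 + 1) ^ 2)).
  - assert (HQ : Lam * (8 * (C ^ 2 + 1) ^ 2) < L * c ^ 2).
    { apply Rmult_lt_reg_r with (/ c ^ 2); [apply Rinv_0_lt_compat; nra |].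
      replace (L * c ^ 2 * / c ^ 2) with L by (field; lra).
      unfold Q, Rdiv in HLQ; lra. }
    apply Rmult_lt_reg_r with (8 * (C ^ 2 + 1) ^ 2); [nra |].
    replace (c ^ 2 * L ^ 3 / (8 * (C ^ 2 + 1) ^ 2) * (8 * (C ^ 2 + 1) ^ 2))
      with (L ^ 2 * (L * c ^ 2)) by (field; nra).
    assert (0 < L ^ 2) by (apply pow_lt; lra); nra.
  - unfold Rdiv; apply Rmult_le_compat_r; [left; apply Rinv_0_lt_compat; nra |].
    apply Rmult_le_compat_l; [nra | exact Hpow].
Qed.

(* For this [alpha] the single index [i0] sits exactly at [i0^a = n]. *)
Lemma h_fun_ge_single (mu : nat -> R) (i0 n : nat) :
  in_l2 mu -> (2 <= i0)%nat -> 1 < INR n -> (1 + 2 * p) * ln (INR i0) < ln (INR n) ->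
  INR n * (Rpower (INR i0) (- 2 * p) * mu i0 ^ 2 / (INR i0 * (C ^ 2 + 1) ^ 2)) <=
  h_fun p kappa mu n ((ln (INR n) / ln (INR i0) - 1 - 2 * p) / 2).
Proof.
  intros Hmu Hi0 Hn Hbig.
  set (x0 := INR i0) in *; set (L := ln (INR n)) in *; set (l0 := ln x0) in *.
  assert (Hx0 : 2 <= x0) by (unfold x0; replace 2 with (INR 2) by (simpl; ring); apply le_INR, Hi0).
  assert (Hl0 : 0 < l0) by (unfold l0; rewrite <- ln_1; apply ln_increasing; lra).
  assert (HL : 0 < L) by (unfold L; rewrite <- ln_1; apply ln_increasing; lra).
  set (alpha := (L / l0 - 1 - 2 * p) / 2).
  assert (Ha : 1 + 2 * alpha + 2 * p = L / l0) by (unfold alpha; field; lra).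
  assert (Halpha : 0 < alpha).
  { assert (1 + 2 * p < L / l0) by (apply Rmult_lt_reg_r with l0; [lra |];
      unfold Rdiv; rewrite Rmult_assoc, Rinv_l; lra); unfold alpha; lra. }
  assert (Hxn : Rpower x0 (1 + 2 * alpha + 2 * p) = INR n)
    by (rewrite Ha; unfold Rpower; fold l0; replace (L / l0 * l0) with L by (field; lra);
        apply exp_ln; lra).
  destruct (kappa_bounds i0 ltac:(lia)) as [Hk [_ HkC]].
  destruct i0 as [| k0]; [lia |].
  assert (HT := term_le_Series _ (h_terms_nonneg mu n alpha ltac:(lra))
                  (ex_series_h_terms mu n alpha Hmu ltac:(lra) ltac:(lra)) k0).
  assert (HTge := h_term_ge n alpha x0 (kappa (S k0)) (mu (S k0)) ltac:(lra) ltac:(lra) Hk p C HkC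
                    (Req_le _ _ Hxn)).
  rewrite h_fun_eq; fold L l0 alpha.
  eapply Rle_trans; [| apply Rmult_le_compat_l;
    [left; apply h_prefactor_pos; lra | eapply Rle_trans; [exact HTge | exact HT]]].
  rewrite h_prefactor_exp, Ha by lra; fold L.
  replace (Rpower x0 (1 + 2 * alpha)) with (INR n * Rpower x0 (- 2 * p))
    by (rewrite <- Hxn, <- Rpower_plus; f_equal; ring).
  replace (exp (- L / (L / l0))) with (/ x0)
    by (replace (- L / (L / l0)) with (- l0) by (field; lra);
        rewrite exp_Ropp; unfold l0; rewrite exp_ln; lra).
  right; fold l0; field; repeat split; nra.
Qed.

Lemma alpha_upper_le_nonzero (Lam : R) (mu : nat -> R) : 0 < Lam -> in_l2 mu ->
  (exists i : nat, (2 <= i)%nat /\ mu i <> 0) ->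
  exists N : nat, forall n : nat, (N <= n)%nat ->
    Rbar_le (alpha_upper p kappa mu Lam n) (ln (INR n) / (2 * ln 2) - 1 / 2 - p).
Proof.
  intros HLam Hmu [i0 [Hi0 Hmu0]].
  set (x0 := INR i0); set (l0 := ln x0).
  assert (Hx0 : 2 <= x0) by (unfold x0; replace 2 with (INR 2) by (simpl; ring); apply le_INR, Hi0).
  assert (Hl02 : ln 2 <= l0) by (apply ln_le; lra).
  assert (Hln2 : 0 < ln 2) by (rewrite <- ln_1; apply ln_increasing; lra).
  set (K := Rpower x0 (- 2 * p) * mu i0 ^ 2 / (x0 * (C ^ 2 + 1) ^ 2)).
  assert (HK : 0 < K) by (apply Rdiv_lt_0_compat; [apply Rmult_lt_0_compat;
    [apply exp_pos | apply pow_lt_compat || nra] | apply Rmult_lt_0_compat; [| apply pow_lt]; nra]).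
  destruct (ln_INR_eventually_ge (Rmax ((1 + 2 * p) * l0 + 1) (27 * Lam / K + 1))) as [N HN].
  exists N; intros n Hn; destruct (HN n Hn) as [HL Hn1].
  set (L := ln (INR n)) in *.
  assert (HLp : (1 + 2 * p) * l0 + 1 <= L) by (eapply Rle_trans; [apply Rmax_l | exact HL]).
  assert (HLK : 27 * Lam / K + 1 <= L) by (eapply Rle_trans; [apply Rmax_r | exact HL]).
  assert (HL0 : 0 < L) by nra.
  apply alpha_upper_le with ((L / l0 - 1 - 2 * p) / 2).
  - assert (1 + 2 * p < L / l0) by (apply Rmult_lt_reg_r with l0; [lra |];
      unfold Rdiv; rewrite Rmult_assoc, Rinv_l; lra); lra.
  - assert (L / l0 <= L / ln 2) by (unfold Rdiv; apply Rmult_le_compat_l;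
      [lra | apply Rinv_le_contravar; lra]).
    replace (L / (2 * ln 2)) with (L / ln 2 / 2) by (field; lra); lra.
  - eapply Rlt_le_trans; [| apply h_fun_ge_single; auto; fold x0 l0 L; lra].
    fold x0 L K.
    assert (HnL : (L / 3) ^ 3 <= INR n)
      by (replace (INR n) with (exp L) by (apply exp_ln; lra); apply exp_ge_cube; lra).
    assert (HLK' : 27 * Lam < L * K) by (apply Rmult_lt_reg_r with (/ K);
      [apply Rinv_0_lt_compat; lra | replace (L * K * / K) with L by (field; lra);
       unfold Rdiv in HLK; lra]).
    apply Rlt_le_trans with ((L / 3) ^ 3 * K); [| apply Rmult_le_compat_r; lra].
    replace ((L / 3) ^ 3 * K) with (L ^ 2 * (L * K) / 27) by field.
    assert (0 < L ^ 2) by (apply pow_lt; lra); nra.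
Qed.

End Weights.

Theorem lemma2p1 (p C : R) (kappa : nat -> R)
  (hp : 0 <= p) (hC : 1 <= C)
  (hkappa : forall i : nat, (1 <= i)%nat ->
     / C * Rpower (INR i) (- p) <= kappa i /\ kappa i <= C * Rpower (INR i) (- p)) :
  (* (i) *)
  (forall l L : R, 0 < l -> 0 < L ->
   forall beta Rad : R, 0 < beta -> 0 < Rad ->
   exists c0 : R, 0 < c0 /\ exists N : nat, forall n : nat, (N <= n)%nat ->
     forall mu : nat -> R, in_l2 mu -> sobolev_ball beta Rad mu ->
       Rbar_le (Finite (beta - c0 / ln (INR n))) (alpha_lower p kappa mu l n)) /\
  (* (ii) *)
  (forall l L : R, 0 < l -> 0 < L ->
   forall gamma Rad : R, 0 < gamma -> 0 < Rad ->
   exists N : nat, forall n : nat, (N <= n)%nat ->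
     forall mu : nat -> R, in_l2 mu -> analytic_ball gamma Rad mu ->
       Rbar_le (Finite (sqrt (ln (INR n)) / ln (ln (INR n)))) (alpha_lower p kappa mu l n)) /\
  (* (iii) *)
  (forall c gamma : R, 0 < c -> 0 < gamma ->
   exists C0 : R, 0 < C0 /\
   forall l L : R, 0 < l -> 0 < L ->
   forall mu : nat -> R, in_l2 mu ->
     (forall i : nat, (1 <= i)%nat -> mu i >= c * Rpower (INR i) (- gamma - 1 / 2)) ->
     exists N : nat, forall n : nat, (N <= n)%nat ->
       Rbar_le (alpha_upper p kappa mu L n)
               (Finite (gamma + C0 * ln (ln (INR n)) / ln (INR n)))) /\
  (* (iv) *)
  (forall l L : R, 0 < l -> 0 < L ->
   forall mu : nat -> R, in_l2 mu ->
     (exists i : nat, (2 <= i)%nat /\ mu i <> 0) ->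
     exists N : nat, forall n : nat, (N <= n)%nat ->
       Rbar_le (alpha_upper p kappa mu L n)
               (Finite (ln (INR n) / (2 * ln 2) - 1 / 2 - p))).
Proof.
  split; [| split; [| split]].
  - intros l _ Hl _ beta Rad Hb HR; eapply alpha_lower_ge_sobolev; eassumption.
  - intros l _ Hl _ g Rad Hg HR; eapply alpha_lower_ge_analytic; eassumption.
  - intros c g Hc Hg.
    destruct (alpha_upper_le_poly_decay p C kappa hp hC hkappa c g Hc Hg) as [C0 [HC0 Hupper]].
    exists C0; split; [exact HC0 |]; intros _ Lam _ HLam; apply Hupper, HLam.
  - intros _ Lam _ HLam mu Hmu Hi0; eapply alpha_upper_le_nonzero; eassumption.
Qed.
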